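(* Let $A$ be an abelian normal subgroup of a finite group $S$, $T=S/A$, $S\cong A\rtimes_\rho T$, and let $\phi$ be an anti-automorphism of $T$ with $\phi^2$ inner; set $L=L(A,\phi)=\{((a,t),(b,\phi(t))): a,b\in A,t\in T\}\le S\times S^{op}$. Then $L\cong(A\times A)\rtimes_{\overline\rho}T$ (via $((a,t),(b,\phi(t)))\mapsto(a,\phi(t)^{-1}b,t)$), where $T$ acts on $A\times A$ by ${}^{\overline t}(a,a')=({}^ta,{}^{\phi(t^{-1})}a')$ and $\overline\rho(t,t')=(\rho(t,t'),{}^{(t't)^{-1}}\rho(t',t))$. The map $((x,t),(y,s))\mapsto s^{-1}\phi(t)$ factors through a bijection $(S\times S^{op})/L\to T$. If $T$ is abelian, then $L$ is normal in $S\times S^{op}$ and the set of cosets $(S\times S^{op})/L$ is a group isomorphic to $T$ via this bijection.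
   Context: For $A\trianglelefteq S$ abelian, $T=S/A$: choose coset representatives $u(t)$, $u(\mathbf 1)=1$; ${}^ta=u(t)au(t)^{-1}$; $\rho(t,t')=u(t)u(t')u(tt')^{-1}\in Z^2(T,A)$; $S\cong A\rtimes_\rho T$ with $(a,t)(a',t')=(a\,{}^ta'\rho(t,t'),tt')$. $S^{op}$ is the opposite group; elements of $S$ are written as pairs $(a,t)$. The twisted semidirect product $(A\times A)\rtimes_{\overline\rho}T$ is defined analogously. *)

From HB Require Import structures.
From mathcomp Require Import all_boot all_fingroup all_solvable.
Unset Printing Implicit Defensive.
Local Open Scope group_scope.

Definition opg (gT : finGroupType) : Type := gT.
HB.instance Definition _ (gT : finGroupType) := Finite.on (opg gT).

Section Opp.
Variable gT : finGroupType.
Definition opg_mul (x y : opg gT) : opg gT := (y : gT) * (x : gT).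
Definition opg_one : opg gT := (1 : gT).
Definition opg_inv (x : opg gT) : opg gT := (x : gT)^-1.
Lemma opg_mulA : associative opg_mul.
Proof. by move=> x y z; rewrite /opg_mul mulgA. Qed.
Lemma opg_mul1 : left_id opg_one opg_mul.
Proof. by move=> x; rewrite /opg_mul /opg_one mulg1. Qed.
Lemma opg_mulV : left_inverse opg_one opg_inv opg_mul.
Proof. by move=> x; rewrite /opg_mul /opg_inv mulgV. Qed.
End Opp.
HB.instance Definition _ (gT : finGroupType) :=
  Finite_isGroup.Build (opg gT) (@opg_mulA gT) (@opg_mul1 gT) (@opg_mulV gT).

Definition to_op {gT : finGroupType} (x : gT) : opg gT := x.
Definition of_op {gT : finGroupType} (x : opg gT) : gT := x.

Definition SxSop {gT : finGroupType} (S : {set gT}) : {set gT * opg gT} :=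
  [set p | (p.1 \in S) && (of_op p.2 \in S)].

Definition anti_aut {gT : finGroupType} (T : {set gT}) (phi : gT -> gT) : Prop :=
  [/\ {in T &, injective phi}, phi @: T = T
    & {in T &, forall x y, phi (x * y) = phi y * phi x}].

Definition square_inner {gT : finGroupType} (T : {set gT}) (phi : gT -> gT) : Prop :=
  exists2 z, z \in T & {in T, forall t, phi (phi t) = t ^ z}.

Definition coset_reps {gT : finGroupType} (S A : {set gT})
    (u : coset_of A -> gT) : Prop :=
  [/\ u 1 = 1 & {in S / A, forall t, u t \in S /\ coset A (u t) = t}].

Definition tact {gT : finGroupType} {A : {set gT}} (u : coset_of A -> gT)
    (t : coset_of A) (a : gT) : gT := u t * a * (u t)^-1.

Definition rho {gT : finGroupType} {A : {set gT}} (u : coset_of A -> gT)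
    (t t' : coset_of A) : gT := u t * u t' * (u (t * t'))^-1.

(* Twisted semidirect product multiplication on M x T:
   (m,t)(m',t') = (m * ^t m' * r(t,t'), t t') *)
Definition tw_mul {mT tT : finGroupType} (act : tT -> mT -> mT)
    (r : tT -> tT -> mT) (x y : mT * tT) : mT * tT :=
  (x.1 * act x.2 y.1 * r x.2 y.2, x.2 * y.2).

Definition actbar {gT : finGroupType} {A : {set gT}} (u : coset_of A -> gT)
    (phi : coset_of A -> coset_of A) (t : coset_of A) (m : gT * gT) : gT * gT :=
  (tact u t m.1, tact u (phi t^-1) m.2).

Definition rhobar {gT : finGroupType} {A : {set gT}} (u : coset_of A -> gT)
    (phi : coset_of A -> coset_of A) (t t' : coset_of A) : gT * gT :=
  (rho u t t', tact u (phi (t * t'))^-1 (rho u (phi t') (phi t))).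

Definition Lset {gT : finGroupType} (S A : {set gT})
    (phi : coset_of A -> coset_of A) : {set gT * opg gT} :=
  [set p in SxSop S | coset A (of_op p.2) == phi (coset A p.1)].

(* ((a,t),(b,phi t)) |-> (a, ^{phi(t)^-1} b, t), where x = a u(t), y = b u(phi t) *)
Definition Lmap {gT : finGroupType} {A : {set gT}} (u : coset_of A -> gT)
    (phi : coset_of A -> coset_of A) (p : gT * opg gT) : (gT * gT) * coset_of A :=
  let t := coset A p.1 in
  ((p.1 * (u t)^-1, tact u (phi t)^-1 (of_op p.2 * (u (phi t))^-1)), t).

Definition AAT {gT : finGroupType} (S A : {set gT}) : {set (gT * gT) * coset_of A} :=
  [set x | [&& x.1.1 \in A, x.1.2 \in A & x.2 \in S / A]].

Definition psi {gT : finGroupType} {A : {set gT}}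
    (phi : coset_of A -> coset_of A) (p : gT * opg gT) : coset_of A :=
  (coset A (of_op p.2))^-1 * phi (coset A p.1).

From HB Require Import structures.
From mathcomp Require Import all_boot all_fingroup all_solvable.
Set Implicit Arguments.
Unset Strict Implicit.
Local Open Scope group_scope.

(* Write every x in S as x = a u(t) with a in A and t = xA in T = S/A.
   An element of L is a pair (x, y) with x = a u(t), y = b u(phi t); the
   map Lmap sends it to the triple (a, ^{phi(t)^-1} b, t). *)

Lemma abelian_commute (gT : finGroupType) (G : {set gT}) (x y : gT) :
  abelian G -> x \in G -> y \in G -> commute x y.
Proof. by move=> /centsP cGG xG yG; apply: cGG. Qed.

Lemma conjg_commute (gT : finGroupType) (x y : gT) : commute x y -> x ^ y = x.
Proof. by move=> cxy; rewrite conjgE cxy mulKg. Qed.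

Lemma invg_mul_eq (gT : finGroupType) (a b p q : gT) :
  a^-1 * p = b^-1 * q -> b * a^-1 = q * p^-1.
Proof. by move/(congr1 (fun z => b * z * p^-1)); rewrite mulKVg !mulgA mulgK. Qed.

Section OppositeCoordinates.
Variable gT : finGroupType.
Implicit Types p q : gT * opg gT.

Lemma pairM (a b c d : gT) : (a, b) * (c, d) = (a * c, b * d).
Proof. by []. Qed.

Lemma opM1 p q : (p * q).1 = p.1 * q.1.
Proof. by []. Qed.

Lemma opM2 p q : of_op (p * q).2 = of_op q.2 * of_op p.2.
Proof. by []. Qed.

Lemma opV1 p : (p^-1).1 = p.1^-1.
Proof. by []. Qed.

Lemma opV2 p : of_op (p^-1).2 = (of_op p.2)^-1.
Proof. by []. Qed.

Lemma opJ1 p q : (p ^ q).1 = p.1 ^ q.1.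
Proof. by []. Qed.

Lemma opJ2 p q : of_op (p ^ q).2 = of_op p.2 ^ (of_op q.2)^-1.
Proof. by rewrite [RHS]conjgE invgK mulgA. Qed.

Lemma in_SxSop (S : {set gT}) p : (p \in SxSop S) = (p.1 \in S) && (of_op p.2 \in S).
Proof. by rewrite inE. Qed.

Lemma SxSopM (S : {group gT}) p q :
  p \in SxSop S -> q \in SxSop S -> p * q \in SxSop S.
Proof. by rewrite !in_SxSop => /andP[p1 p2] /andP[q1 q2]; rewrite opM1 opM2 !groupM. Qed.

End OppositeCoordinates.

Section AntiAutomorphism.
Variables (gT : finGroupType) (T : {group gT}) (phi : gT -> gT).
Hypothesis antiT : anti_aut T phi.

Lemma anti_aut_mem t : t \in T -> phi t \in T.
Proof. by case: antiT => _ imT _ tT; rewrite -imT imset_f. Qed.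

Lemma anti_autM t w : t \in T -> w \in T -> phi (t * w) = phi w * phi t.
Proof. by case: antiT => _ _; apply. Qed.

Lemma anti_aut1 : phi 1 = 1.
Proof. by apply: (mulgI (phi 1)); rewrite -anti_autM ?group1 // !mulg1. Qed.

Lemma anti_autV t : t \in T -> phi t^-1 = (phi t)^-1.
Proof.
move=> tT; have := anti_autM (groupVr tT) tT; rewrite mulVg anti_aut1 => e.
by apply/eqP; rewrite eq_sym eq_invg_mul -e.
Qed.

End AntiAutomorphism.

Section CosetData.
Variables (gT : finGroupType) (S A : {group gT}) (u : coset_of A -> gT).
Hypotheses (nsAS : A <| S) (abA : abelian A) (reps : coset_reps S A u).
Local Notation T := (S / A).
Local Notation c := (coset A).

Lemma norm_of_S x : x \in S -> x \in 'N(A).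
Proof. by move=> xS; apply: (subsetP (normal_norm nsAS)). Qed.

Lemma S_of_A x : x \in A -> x \in S.
Proof. by move=> xA; apply: (subsetP (normal_sub nsAS)). Qed.

Lemma cosetT x : x \in S -> c x \in T.
Proof. exact: mem_quotient. Qed.

Lemma cosetM x y : x \in S -> y \in S -> c (x * y) = c x * c y.
Proof. by move=> xS yS; rewrite coset_morphM ?norm_of_S. Qed.

Lemma cosetV x : x \in S -> c x^-1 = (c x)^-1.
Proof. by move=> xS; rewrite morphV ?norm_of_S. Qed.

Lemma cosetJ x y : x \in S -> y \in S -> c (x ^ y) = c x ^ c y.
Proof. by move=> xS yS; rewrite morphJ ?norm_of_S. Qed.

Lemma rep_mem t : t \in T -> u t \in S.
Proof. by case: reps => _ h /h []. Qed.

Lemma rep_coset t : t \in T -> c (u t) = t.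
Proof. by case: reps => _ h /h []. Qed.

Lemma same_coset_div x y : x \in S -> y \in S -> c x = c y -> x * y^-1 \in A.
Proof.
move=> xS yS e; rewrite -mem_rcoset.
by apply/rcoset_kercosetP; rewrite ?norm_of_S.
Qed.

Lemma A_part x : x \in S -> x * (u (c x))^-1 \in A.
Proof. by move=> xS; rewrite same_coset_div ?rep_mem ?cosetT ?rep_coset ?cosetT. Qed.

(* Since A is abelian, conjugation on A depends only on the coset mod A. *)
Lemma conj_coset a g h : a \in A -> g \in S -> h \in S -> c g = c h -> a ^ g = a ^ h.
Proof.
move=> aA gS hS e; have [z zA ->] := kercoset_rcoset (norm_of_S gS) (norm_of_S hS) e.
by rewrite conjgM [a ^ z]conjg_commute //; apply: (abelian_commute abA).
Qed.

Lemma tactE w a : tact u w a = a ^ (u w)^-1.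
Proof. by rewrite /tact conjgE invgK !mulgA. Qed.

Lemma tact_mem w a : w \in T -> a \in A -> tact u w a \in A.
Proof. by move=> wT aA; rewrite tactE memJ_norm // norm_of_S // groupV rep_mem. Qed.

Lemma tactM w a b : tact u w (a * b) = tact u w a * tact u w b.
Proof. by rewrite !tactE conjMg. Qed.

Lemma tact_comp w1 w2 a : w1 \in T -> w2 \in T -> a \in A ->
  tact u w1 (tact u w2 a) = tact u (w1 * w2) a.
Proof.
move=> w1T w2T aA; have w12T := groupM w1T w2T.
rewrite !tactE -conjgM -invMg; apply: conj_coset; rewrite ?groupV ?groupM ?rep_mem //.
by rewrite !cosetV ?groupM ?rep_mem // cosetM ?rep_mem // !rep_coset.
Qed.

Section SubgroupL.
Variable phi : coset_of A -> coset_of A.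
Hypothesis antiT : anti_aut T phi.
Local Notation L := (Lset S A phi).

Lemma in_L p :
  (p \in L) = [&& p.1 \in S, of_op p.2 \in S & c (of_op p.2) == phi (c p.1)].
Proof. by rewrite !inE andbA. Qed.

Lemma L_sub : L \subset SxSop S.
Proof. by apply/subsetP => p; rewrite in_L in_SxSop => /and3P[-> ->]. Qed.

(* L is a subgroup because phi reverses products and so does S^op. *)
Lemma L_group : group_set L.
Proof.
apply/group_setP; split; first by rewrite in_L /= group1 morph1 (anti_aut1 antiT) ?eqxx.
move=> p q; rewrite !in_L => /and3P[p1 p2 /eqP ep] /and3P[q1 q2 /eqP eq].
by rewrite opM1 opM2 !groupM // !cosetM // ep eq (anti_autM antiT) ?cosetT ?eqxx.
Qed.

Canonical L_grp := Group L_group.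

Lemma Lmap_inj : {in L &, injective (Lmap u phi)}.
Proof.
move=> [x1 y1] [x2 y2] _ _; rewrite /Lmap /= !tactE => -[ex ey et].
rewrite -et in ex ey; move/conjg_inj/mulIg: ey; rewrite /of_op => ->.
by rewrite (mulIg _ _ _ ex).
Qed.

(* The triple (a, a', t) is the image of (a u(t), b u(phi t)), where b is a'
   conjugated back by u(phi(t)^-1). *)
Lemma Lmap_im : Lmap u phi @: L = AAT S A.
Proof.
apply/setP => z; apply/imsetP/idP.
  case=> -[x y]; rewrite in_L /= => /and3P[xS yS /eqP e] ->.
  have sT := anti_aut_mem antiT (cosetT xS).
  have yA : of_op y * (u (phi (c x)))^-1 \in A by rewrite -e A_part.
  by rewrite inE /= A_part // tact_mem ?groupV // cosetT.
case: z => -[a a'] t; rewrite inE /= => /and3P[aA a'A tT].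
have sT := anti_aut_mem antiT tT.
have a'J : a' ^ u (phi t)^-1 \in A by rewrite memJ_norm // norm_of_S // rep_mem // groupV.
exists (a * u t, to_op (a' ^ u (phi t)^-1 * u (phi t))).
  have xS : a * u t \in S := groupM (S_of_A aA) (rep_mem tT).
  have yS : a' ^ u (phi t)^-1 * u (phi t) \in S := groupM (S_of_A a'J) (rep_mem sT).
  by rewrite in_L /= /of_op /to_op xS yS !coset_kerl // !rep_coset ?eqxx.
by rewrite /Lmap /= coset_kerl // rep_coset // !mulgK tactE conjgK.
Qed.

Lemma Lmap_morph : {in L &, forall p q, Lmap u phi (p * q)
   = tw_mul (actbar u phi) (rhobar u phi) (Lmap u phi p) (Lmap u phi q)}.
Proof.
move=> [x1 y1] [x2 y2]; rewrite !in_L /=.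
move=> /and3P[x1S y1S /eqP e1] /and3P[x2S y2S /eqP e2].
rewrite /Lmap /tw_mul /actbar /rhobar opM1 opM2 /= !pairM cosetM //.
have t1T := cosetT x1S; have t2T := cosetT x2S.
have s1T := anti_aut_mem antiT t1T; have s2T := anti_aut_mem antiT t2T.
congr ((_, _), _); first by rewrite /tact /rho !mulgA !mulgKV.
rewrite (anti_autM antiT) // (anti_autV antiT) //.
set s1 := phi (c x1); set s2 := phi (c x2).
set b1 := of_op y1 * (u s1)^-1; set b2 := of_op y2 * (u s2)^-1.
have b1A : b1 \in A by rewrite /b1 /s1 -e1 A_part.
have b2A : b2 \in A by rewrite /b2 /s2 -e2 A_part.
(* the A-part of y2 y1 in S is b2 ^{s2}b1 rho(s2, s1) *)
have -> : of_op y2 * of_op y1 * (u (s2 * s1))^-1 = b2 * tact u s2 b1 * rho u s2 s1.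
  by rewrite /b1 /b2 /tact /rho !mulgA !mulgKV.
have wT : (s2 * s1)^-1 \in T by rewrite groupV groupM.
rewrite (tactM _ (b2 * _)) (tactM _ b2) tact_comp // tact_comp ?groupV //.
rewrite invMg mulgKV /=; congr (_ * _); apply: (abelian_commute abA).
  exact: tact_mem (groupM (groupVr s1T) (groupVr s2T)) b2A.
exact: tact_mem (groupVr s1T) b1A.
Qed.

Section QuotientByL.
Local Notation SS := (SxSop S).

Lemma psi_mem g : g \in SS -> psi phi g \in T.
Proof.
rewrite in_SxSop => /andP[g1 g2].
by rewrite groupM ?groupV ?(anti_aut_mem antiT) ?cosetT.
Qed.

Lemma psi_coset g l : g \in SS -> l \in L -> psi phi (g * l) = psi phi g.
Proof.
rewrite in_SxSop in_L => /andP[g1 g2] /and3P[l1 l2 /eqP el].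
by rewrite /psi opM1 opM2 !cosetM // el invMg (anti_autM antiT) ?cosetT // !mulgA mulgKV.
Qed.

Lemma psi_eq_coset g h : g \in SS -> h \in SS -> psi phi g = psi phi h -> g^-1 * h \in L.
Proof.
rewrite !in_SxSop => /andP[g1 g2] /andP[h1 h2] /invg_mul_eq e.
rewrite in_L opM1 opM2 opV1 opV2 !groupM ?groupV //=.
rewrite cosetM ?groupV // cosetV // cosetM ?groupV // cosetV //.
by rewrite (anti_autM antiT) ?groupV ?cosetT // (anti_autV antiT) ?cosetT // e.
Qed.

Lemma psiM (abT : abelian T) g h : g \in SS -> h \in SS ->
  psi phi (g * h) = psi phi g * psi phi h.
Proof.
rewrite !in_SxSop => /andP[g1 g2] /andP[h1 h2].
rewrite /psi opM1 opM2 !cosetM // invMg (anti_autM antiT) ?cosetT //.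
rewrite -!mulgA; congr (_ * _).
by rewrite mulgA (abelian_commute abT) ?groupM ?groupV ?(anti_aut_mem antiT) ?cosetT.
Qed.

Lemma L_conj (abT : abelian T) g l : g \in SS -> l \in L -> l ^ g \in L.
Proof.
have cosetJ_abelian x y : x \in S -> y \in S -> c (x ^ y) = c x.
  move=> xS yS; rewrite cosetJ // conjg_commute //.
  by apply: (abelian_commute abT); apply: cosetT.
rewrite in_SxSop !in_L => /andP[g1 g2] /and3P[l1 l2 /eqP el].
by rewrite opJ1 opJ2 !groupJ ?groupV //= !cosetJ_abelian ?groupV // el.
Qed.

Lemma L_normal (abT : abelian T) : L <| SS.
Proof.
apply/normalP; split; first exact: L_sub.
move=> g gS; apply/eqP; rewrite eqEcard cardJg leqnn andbT.
by apply/subsetP => z; rewrite mem_conjg => /(L_conj abT gS); rewrite conjgKV.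
Qed.

Definition psi_bar (X : {set gT * opg gT}) : coset_of A := psi phi (repr X).

Lemma psi_barE g : g \in SS -> psi_bar (g *: L) = psi phi g.
Proof.
move=> gS; rewrite /psi_bar.
have /lcosetP[l lL ->] := mem_repr g (lcoset_refl L_grp g : g \in g *: L).
exact: psi_coset.
Qed.

Lemma psi_bar_inj : {in lcosets L SS &, injective psi_bar}.
Proof.
move=> X Y /lcosetsP[g gS ->] /lcosetsP[h hS ->]; rewrite !psi_barE // => e.
have hgL : h \in g *: L_grp by rewrite mem_lcoset psi_eq_coset.
by rewrite (lcoset_eqP hgL).
Qed.

(* Every t in T is psi of (1, u(t)^-1). *)
Lemma psi_bar_im : psi_bar @: lcosets L SS = T.
Proof.
apply/setP => t; apply/imsetP/idP.
  by case=> X /lcosetsP[g gS ->] ->; rewrite psi_barE // psi_mem.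
move=> tT; set g : gT * opg gT := (1, to_op (u t)^-1).
have gS : g \in SS by rewrite in_SxSop /= group1 groupV rep_mem.
exists (g *: L); first by apply/lcosetsP; exists g.
rewrite psi_barE // /psi /= cosetV ?rep_mem // rep_coset // invgK morph1.
by rewrite (anti_aut1 antiT) mulg1.
Qed.

Lemma psi_barM (abT : abelian T) : {in SS &, forall g h,
    psi_bar ((g *: L) * (h *: L)) = psi_bar (g *: L) * psi_bar (h *: L)}.
Proof.
move=> g h gS hS; rewrite !psi_barE // /psi_bar.
have gh : g * h \in (g *: L) * (h *: L).
  by apply: mem_mulg; apply: (lcoset_refl L_grp).
case/mulsgP: (mem_repr _ gh) => x y /lcosetP[l1 l1L ->] /lcosetP[l2 l2L ->] ->.
have [l1S l2S] := (subsetP L_sub _ l1L, subsetP L_sub _ l2L).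
by rewrite psiM ?SxSopM // !psi_coset.
Qed.

End QuotientByL.

End SubgroupL.

End CosetData.

Theorem lemma3p3 (gT : finGroupType) (S A : {group gT})
    (u : coset_of A -> gT) (phi : coset_of A -> coset_of A) :
  A <| S -> abelian A ->
  coset_reps S A u ->
  anti_aut (S / A) phi -> square_inner (S / A) phi ->
  let L := Lset S A phi in
  [/\ (* L is a subgroup of S x S^op *)
      L \subset SxSop S /\ group_set L,
      (* L is isomorphic to (A x A) x|_{rho bar} T via Lmap *)
      [/\ {in L &, injective (Lmap u phi)},
          Lmap u phi @: L = AAT S A
        & {in L &, forall p q, Lmap u phi (p * q)
             = tw_mul (actbar u phi) (rhobar u phi) (Lmap u phi p) (Lmap u phi q)}]
    & (* psi factors through a bijection F : (S x S^op)/L -> T *)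
      exists F : {set gT * opg gT} -> coset_of A,
        [/\ {in SxSop S, forall g, F (g *: L) = psi phi g},
            {in lcosets L (SxSop S) &, injective F},
            F @: lcosets L (SxSop S) = S / A
          & (* if T is abelian, L is normal and F is a group isomorphism *)
            abelian (S / A) ->
              L <| SxSop S /\
              {in SxSop S &, forall g h,
                  F ((g *: L) * (h *: L)) = F (g *: L) * F (h *: L)}]].
Proof.
move=> nsAS abA reps antiT _ L.
split; first by split; [exact: L_sub | exact: L_group].
  split; [exact: Lmap_inj | exact: Lmap_im | exact: Lmap_morph].
exists (psi_bar phi); split.
- exact: psi_barE.
- exact: psi_bar_inj.
- exact (psi_bar_im nsAS reps antiT).
by move=> abT; split; [exact: L_normal | exact: psi_barM].
Qed.
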